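(* Let $\Gamma\Rightarrow\Delta$ be a sequent. (1) If $\mathsf{G}^c(\mathbf{K}_D)\vdash\Gamma\Rightarrow\Delta$ then $\Gamma\Rightarrow\Delta$ is valid in the class $\mathbb{M}$ of all models. (2) If $\mathsf{G}^c(\mathbf{KD}_D)\vdash\Gamma\Rightarrow\Delta$ then $\Gamma\Rightarrow\Delta$ is valid in $\mathbb{M}_{\mathbf{ser}}$. (3) If $\mathsf{G}^c(\mathbf{KT}_D)\vdash\Gamma\Rightarrow\Delta$ then $\Gamma\Rightarrow\Delta$ is valid in $\mathbb{M}_{\mathbf{ref}}$.
   Context: Language: fix a finite nonempty set $\mathsf{Agt}$ of agents and a countable set $\mathsf{Prop}$ of propositional variables; $\mathsf{Grp}$ is the set of nonempty subsets of $\mathsf{Agt}$. Formulas: $\alpha::=p\mid\bot\mid\alpha\wedge\alpha\mid\alpha\vee\alpha\mid\alpha\rightarrow\alpha\mid\neg\alpha\mid D_G\alpha$ ($p\in\mathsf{Prop}$, $G\in\mathsf{Grp}$). Outmost-boxed formula: one of the form $D_G\gamma$. Semantics: a model $M=(W,(R_G)_{G\in\mathsf{Grp}},V)$ has a set $W$ of states, binary relations $R_G\subseteq W\times W$ with $R_H\subseteq R_G$ whenever $G\subseteq H$, and $V:\mathsf{Prop}\to\mathcal P(W)$. Truth is classical for connectives and $M,w\models D_G\alpha$ iff $M,v\models\alpha$ for all $v$ with $(w,v)\in R_G$. $\mathbb{M}$ is the class of all models; $\mathbb{M}_{\mathbf{ser}}$ the class of models where $R_{\{a\}}$ is serial for every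 $a\in\mathsf{Agt}$; $\mathbb{M}_{\mathbf{ref}}$ the class where every $R_G$ is reflexive. A sequent $\Gamma\Rightarrow\Delta$ is valid in a class of models if $\bigwedge\Gamma\rightarrow\bigvee\Delta$ is true at every state of every model of the class (empty conjunction is $\top$, empty disjunction is $\bot$). Sequent calculi (sequents $\Gamma\Rightarrow\Delta$ are pairs of finite multisets; derivable = root of a finite tree built from initial sequents by rules): $\mathsf{G}(\mathbf{K}_D)$ has initial sequents $\Gamma,p\Rightarrow p,\Delta$ and $\bot,\Gamma\Rightarrow\Delta$; rules $(R\wedge)$ from $\Gamma\Rightarrow\Delta,\alpha_1$ and $\Gamma\Rightarrow\Delta,\alpha_2$ infer $\Gamma\Rightarrow\Delta,\alpha_1\wedge\alpha_2$; $(L\wedge)$ from $\alpha_1,\alpha_2,\Gamma\Rightarrow\Delta$ infer $\alpha_1\wedge\alpha_2,\Gamma\Rightarrow\Delta$; $(R\vee)$ from $\Gamma\Rightarrow\Delta,\alpha_1,\alpha_2$ infer $\Gamma\Rightarrow\Delta,\alpha_1\vee\alpha_2$; $(L\vee)$ from $\alpha_1,\Gamma\Rightarrow\Delta$ and $\alpha_2,\Gamma\Rightarrow\Delta$ infer $\alpha_1\vee\alpha_2,\Gamma\Rightarrow\Delta$; $(R\rightarrow)$ from $\alpha_1,\Gamma\Rightarrow\Delta,\alpha_2$ infer $\Gamma\Rightarrow\Delta,\alpha_1\rightarrow\alpha_2$; $(L\rightarrow)$ from $\Gamma\Rightarrow\Delta,\alpha_1$ and $\alpha_2,\Gamma\Rightarrow\Delta$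 infer $\alpha_1\rightarrow\alpha_2,\Gamma\Rightarrow\Delta$; $(R\neg)$ from $\alpha,\Gamma\Rightarrow\Delta$ infer $\Gamma\Rightarrow\Delta,\neg\alpha$; $(L\neg)$ from $\Gamma\Rightarrow\Delta,\alpha$ infer $\neg\alpha,\Gamma\Rightarrow\Delta$; $(D_K)$: from $\alpha_1,\dots,\alpha_n\Rightarrow\beta$ ($n\ge0$) infer $\Sigma,D_{G_1}\alpha_1,\dots,D_{G_n}\alpha_n\Rightarrow D_G\beta,\Omega$ where all $G_i\subseteq G$, $\Sigma$ consists only of propositional variables, $\bot$, and $D_H\gamma$ with $H\not\subseteq G$, and $\Omega$ only of propositional variables, $\bot$, outmost-boxed formulas. $\mathsf{G}(\mathbf{KD}_D)$ adds $(D_D)$: from $\Gamma\Rightarrow$ with $\Gamma\neq\emptyset$ infer $\Sigma,D_{\{a\}}\Gamma\Rightarrow\Omega$, $\Sigma$ only propositional variables, $\bot$, $D_H\gamma$ with $H\neq\{a\}$; $\Omega$ only propositional variables, $\bot$, outmost-boxed formulas. $\mathsf{G}(\mathbf{KT}_D)$ adds to $\mathsf{G}(\mathbf{K}_D)$ $(D_T)$: from $D_G\alpha,\alpha,\Gamma\Rightarrow\Delta$ infer $D_G\alpha,\Gamma\Rightarrow\Delta$. $\mathsf{G}^c(\mathbf{L})$ is $\mathsf{G}(\mathbf{L})$ plus the cut rule: from $\Gamma\Rightarrow\Delta,C$ and $C,\Gamma'\Rightarrow\Delta'$ infer $\Gamma,\Gamma'\Rightarrow\Delta,\Delta'$. 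*)

From mathcomp Require Import all_boot.
From Stdlib Require Import List Permutation.
Set Implicit Arguments. Unset Strict Implicit. Unset Printing Implicit Defensive.

Section Syntax.
Variables (Agt : finType) (PV : Type).

Definition grp := {G : {set Agt} | G != set0}.

Inductive form : Type :=
| Var of PV
| Bot
| And of form & form
| Or of form & form
| Imp of form & form
| Neg of form
| Box of grp & form.

Lemma singleton_nonempty (a : Agt) : [set a] != set0.
Proof. by apply/set0Pn; exists a; rewrite in_set1. Qed.
Definition sgrp (a : Agt) : grp := exist _ [set a] (singleton_nonempty a).

Definition is_outboxed (f : form) : Prop :=
  match f with Box _ _ => True | _ => False end.

Definition omega_ok (f : form) : Prop :=
  match f with Var _ | Bot | Box _ _ => True | _ => False end.

Definition sigmaK_ok (G : grp) (f : form) : Prop :=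
  match f with
  | Var _ | Bot => True
  | Box H _ => ~~ (sval H \subset sval G)
  | _ => False
  end.

Definition sigmaD_ok (a : Agt) (f : form) : Prop :=
  match f with
  | Var _ | Bot => True
  | Box H _ => sval H != [set a]
  | _ => False
  end.

Inductive logic := LK | LKD | LKT.

(* Sequents are pairs of finite multisets, represented as lists closed under
   permutation (rule [d_perm]).  [derivable L] is derivability in G^c(L),
   i.e. the calculus G(L) together with the cut rule. *)
Inductive derivable (L : logic) : list form -> list form -> Prop :=
| d_perm G D G' D' : derivable L G D -> Permutation G G' -> Permutation D D' ->
    derivable L G' D'
| d_id p G D : derivable L (Var p :: G) (Var p :: D)
| d_bot G D : derivable L (Bot :: G) D
| d_Rand G D a b : derivable L G (a :: D) -> derivable L G (b :: D) ->
    derivable L G (And a b :: D)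
| d_Land G D a b : derivable L (a :: b :: G) D -> derivable L (And a b :: G) D
| d_Ror G D a b : derivable L G (a :: b :: D) -> derivable L G (Or a b :: D)
| d_Lor G D a b : derivable L (a :: G) D -> derivable L (b :: G) D ->
    derivable L (Or a b :: G) D
| d_Rimp G D a b : derivable L (a :: G) (b :: D) -> derivable L G (Imp a b :: D)
| d_Limp G D a b : derivable L G (a :: D) -> derivable L (b :: G) D ->
    derivable L (Imp a b :: G) D
| d_Rneg G D a : derivable L (a :: G) D -> derivable L G (Neg a :: D)
| d_Lneg G D a : derivable L G (a :: D) -> derivable L (Neg a :: G) D
(* (D_K): boxed premises given as a list of pairs (G_i, alpha_i) *)
| d_DK (Sg Om : list form) (l : list (grp * form)) (Gr : grp) (b : form) :
    derivable L (map snd l) [:: b] ->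
    (forall p, In p l -> sval p.1 \subset sval Gr) ->
    (forall f, In f Sg -> sigmaK_ok Gr f) ->
    (forall f, In f Om -> omega_ok f) ->
    derivable L (Sg ++ map (fun p => Box p.1 p.2) l) (Box Gr b :: Om)
| d_DD (Sg Om G : list form) (a : Agt) :
    L = LKD ->
    G <> nil ->
    derivable L G nil ->
    (forall f, In f Sg -> sigmaD_ok a f) ->
    (forall f, In f Om -> omega_ok f) ->
    derivable L (Sg ++ map (Box (sgrp a)) G) Om
| d_DT (Gr : grp) a G D :
    L = LKT ->
    derivable L (Box Gr a :: a :: G) D ->
    derivable L (Box Gr a :: G) D
| d_cut G D G' D' C :
    derivable L G (D ++ [:: C]) -> derivable L (C :: G') D' ->
    derivable L (G ++ G') (D ++ D').

Record model := Model {
  W : Type;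
  R : grp -> W -> W -> Prop;
  V : PV -> W -> Prop;
  R_anti : forall G H : grp, sval G \subset sval H ->
           forall w v, R H w v -> R G w v }.

Fixpoint sat (M : model) (w : W M) (f : form) : Prop :=
  match f with
  | Var p => @V M p w
  | Bot => False
  | And a b => @sat M w a /\ @sat M w b
  | Or a b => @sat M w a \/ @sat M w b
  | Imp a b => @sat M w a -> @sat M w b
  | Neg a => ~ @sat M w a
  | Box G a => forall v, @R M G w v -> @sat M v a
  end.

Definition serial_model (M : model) : Prop :=
  forall (a : Agt) (w : W M), exists v, @R M (sgrp a) w v.

Definition reflexive_model (M : model) : Prop :=
  forall (G : grp) (w : W M), @R M G w w.

Definition valid_in (C : model -> Prop) (G D : list form) : Prop :=
  forall M : model, C M -> forall w : W M,
    (forall f, In f G -> @sat M w f) -> exists2 f, In f D & @sat M w f.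

End Syntax.

From mathcomp Require Import all_boot.
From Stdlib Require Import List Permutation Classical.

(* Each propositional rule and the
   cut rule preserve truth of a sequent at every single world.  The modal
   rules look one step ahead: (D_K) because R_G contains every R_{G_i} with
   G_i a subset of G, (D_D) because seriality supplies an R_{a}-successor at
   which the premise forbids all of Gamma to hold, and (D_T) because a
   reflexive world sees itself.  The side conditions on Sigma and Omega only
   matter for cut elimination; soundness holds without them, and without
   Agt being nonempty. *)

Lemma In_cat (T : Type) (x : T) (s1 s2 : list T) :
  In x (s1 ++ s2) <-> In x s1 \/ In x s2.
Proof. by elim: s1 => [|y s1 IH] /=; [|rewrite IH]; tauto. Qed.

Section Soundness.
Variables (Agt : finType) (PV : Type).

Local Notation form := (form Agt PV).
Local Notation model := (model Agt PV).

Definition holds {M : model} (w : W M) (G D : list form) : Prop :=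
  (forall f, In f G -> sat w f) -> exists2 f, In f D & sat w f.

Section World.
Variables (M : model) (w : W M).

Lemma holds_consl a G D : holds w (a :: G) D <-> (sat w a -> holds w G D).
Proof.
split=> [H wa wG | H wG]; first by apply: H => f [<-|/wG].
by apply: H => [|f Hf]; apply: wG; [left|right].
Qed.

Lemma holds_consr a G D : holds w G (a :: D) <-> sat w a \/ holds w G D.
Proof.
split=> [H | [wa _ | H wG]].
- case: (classic (sat w a)) => [|nwa]; [by left | right] => wG.
  by case: (H wG) => f [<- //|Hf] wf; exists f.
- by exists a; first left.
- by case: (H wG) => f Hf wf; exists f; first right.
Qed.

Lemma holds_perm G D G' D' :
  Permutation G G' -> Permutation D D' -> holds w G D -> holds w G' D'.
Proof.
move=> pG pD H wG'; case: H => [f /(Permutation_in _ pG)/wG' // | f Hf wf].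
by exists f; first exact: Permutation_in pD Hf.
Qed.

Lemma holds_cut G D G' D' C :
  holds w G (D ++ [:: C]) -> holds w (C :: G') D' -> holds w (G ++ G') (D ++ D').
Proof.
move=> H1 H2 wGG'.
have wG f : In f G -> sat w f by move=> Hf; apply: wGG'; apply/In_cat; left.
have wG' f : In f G' -> sat w f by move=> Hf; apply: wGG'; apply/In_cat; right.
have [f /In_cat [Hf wf|[<-|[]] wC]] := H1 wG.
  by exists f => //; apply/In_cat; left.
case: H2 => [g [<- //|/wG'] //|g Hg wg].
by exists g => //; apply/In_cat; right.
Qed.

Lemma holds_DT Gr a G D :
  R Gr w w -> holds w (Box Gr a :: a :: G) D -> holds w (Box Gr a :: G) D.
Proof. by move=> Rww; rewrite !holds_consl => H wBa; apply: H => //; apply: wBa. Qed.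

End World.

Variable C : model -> Prop.

Lemma valid_DK (Sg Om : list form) (l : list (grp Agt * form)) (Gr : grp Agt)
    (b : form) :
  valid_in C (map snd l) [:: b] ->
  (forall p, In p l -> sval p.1 \subset sval Gr) ->
  valid_in C (Sg ++ map (fun p => Box p.1 p.2) l) (Box Gr b :: Om).
Proof.
move=> H Hsub M CM w wG; exists (Box Gr b); first by left.
move=> v Rwv; case: (H M CM v) => [f /in_map_iff [p [<- Hp]] | f [<-|[]] //].
have: In (Box p.1 p.2) (Sg ++ map (fun p => Box p.1 p.2) l).
  by apply/In_cat; right; apply: (in_map (fun p => Box p.1 p.2)).
by move/wG; apply; apply: R_anti Rwv; apply: Hsub.
Qed.

Lemma valid_DD (Sg Om G : list form) (a : Agt) :
  (forall M, C M -> serial_model M) ->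
  valid_in C G [::] -> valid_in C (Sg ++ map (Box (sgrp a)) G) Om.
Proof.
move=> ser H M CM w wG; case: (ser M CM a w) => v Rwv.
case: (H M CM v) => [f Hf | f []].
by apply: (wG (Box (sgrp a) f)) => //; apply/In_cat; right; apply: in_map.
Qed.

Lemma derivable_valid L :
  (L = LKD -> forall M, C M -> serial_model M) ->
  (L = LKT -> forall M, C M -> reflexive_model M) ->
  forall G D, derivable L G D -> valid_in C G D.
Proof.
move=> ser refl.
suff: forall G D, derivable L G D -> forall M, C M -> forall w : W M, holds w G D
  by [].
move=> G D; elim=> {G D}.
- by move=> G D G' D' _ IH pG pD M CM w; apply: holds_perm pG pD (IH M CM w).
- by move=> p G D M CM w; rewrite holds_consl holds_consr; left.
- by move=> G D M CM w; rewrite holds_consl.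
- move=> G D a b _ IH1 _ IH2 M CM w; move: (IH1 M CM w) (IH2 M CM w).
  rewrite !holds_consr /=; tauto.
- move=> G D a b _ IH M CM w; move: (IH M CM w); rewrite !holds_consl /=; tauto.
- move=> G D a b _ IH M CM w; move: (IH M CM w); rewrite !holds_consr /=; tauto.
- move=> G D a b _ IH1 _ IH2 M CM w; move: (IH1 M CM w) (IH2 M CM w).
  rewrite !holds_consl /=; tauto.
- move=> G D a b _ IH M CM w; move: (IH M CM w).
  rewrite holds_consl !holds_consr /=; case: (classic (sat w a)); tauto.
- move=> G D a b _ IH1 _ IH2 M CM w; move: (IH1 M CM w) (IH2 M CM w).
  rewrite !holds_consl holds_consr /=; tauto.
- move=> G D a _ IH M CM w; move: (IH M CM w).
  rewrite holds_consl holds_consr /=; case: (classic (sat w a)); tauto.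
- move=> G D a _ IH M CM w; move: (IH M CM w).
  rewrite holds_consl holds_consr /=; tauto.
- by move=> Sg Om l Gr b _ IH Hsub _ _; apply: valid_DK.
- by move=> Sg Om G a HL _ _ IH _ _; apply: valid_DD => //; apply: ser.
- by move=> Gr a G D HL _ IH M CM w; apply: holds_DT (IH M CM w); apply: refl.
- move=> G D G' D' Cf _ IH1 _ IH2 M CM w.
  exact: holds_cut (IH1 M CM w) (IH2 M CM w).
Qed.

End Soundness.

Theorem theorem4p1 (Agt : finType) (PV : Type) (hAgt : 0 < #|Agt|)
  (Gamma Delta : list (form Agt PV)) :
  (derivable LK Gamma Delta -> valid_in (fun _ => True) Gamma Delta) /\
  (derivable LKD Gamma Delta -> valid_in (@serial_model Agt PV) Gamma Delta) /\
  (derivable LKT Gamma Delta -> valid_in (@reflexive_model Agt PV) Gamma Delta).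
Proof.
split; [|split]; apply: derivable_valid => //.
Qed.
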